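(* Let $\mathfrak{B}=\{\mathscr{M}^{KI},\mathscr{M}^{KK},\mathscr{A}^{KK},\mathscr{H}^{KK},\mathscr{S}\}$. Then the graph parameter $p_{\mathfrak{B}}$ is equivalent to each of $\widetilde{\Delta}$, $\mathsf{cdeg}$, $\max\{\mathsf{cideg},\widetilde{\omega}\}$, $\max\{\alpha^{\ast},\widetilde{\omega}\}$ and $\max\{\theta^{\ast},\widetilde{\omega}\}$; that is, for each such parameter $q$ there are functions $f,g\colon\mathbb{N}\to\mathbb{N}$ with $p_{\mathfrak{B}}(G)\le f(q(G))$ and $q(G)\le g(p_{\mathfrak{B}}(G))$ for every finite graph $G$.
   Context: Two vertices are equivalent if they lie in exactly the same maximal cliques. $\widetilde{G}$ is the clique-quotient graph (equivalence classes as vertices, adjacency inherited from representatives), $\widetilde{\Delta}(G)$ its maximum degree. $\widetilde{\omega}(G)$ is the maximum over maximal cliques $K$ of the number of equivalence classes meeting $K$; $\mathsf{cideg}(G)$ the maximum over vertices of the number of maximal cliques containing it; $\mathsf{cdeg}(G)$ the maximum over maximal cliques $K$ of the number of other maximal cliques intersecting $K$. $\alpha^{\ast}(G)=\max_v\alpha(G[N[v]])$, $\theta^{\ast}(G)=\max_v\theta(G[N[v]])$, $\theta$ the clique-cover number. For disjoint ordered sets $X=\{x_1,\dots,x_n\}$, $Y=\{y_1,\dots,y_n\}$ and a vertex $c$: $\mathscr{S}_n$ is the star with centre $c$ and $n$ leaves; $\mathscr{M}^{KI}_n$ has edges $x_iy_i$ and $X$ a clique, $Y$ independent; $\mathscr{M}^{KK}_n$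 has edges $x_iy_i$ and $X,Y$ cliques; $\mathscr{A}^{KK}_n$ has edges $x_iy_j$ ($i\ne j$) and $X,Y$ cliques; $\mathscr{H}^{KK}_n$ has edges $x_iy_j$ ($i\le j$) and $X,Y$ cliques. For a family $\mathfrak{F}$ of such sequences, $p_{\mathfrak{F}}(G)$ is the maximum $n$ such that some $\mathscr{X}\in\mathfrak{F}$ has $\mathscr{X}_n$ as an induced subgraph of $G$. *)

(* Finite simple graphs are (T : finType, e : rel T) with e
   symmetric and irreflexive. *)
From mathcomp Require Import all_boot.
Set Implicit Arguments. Unset Strict Implicit. Unset Printing Implicit Defensive.

Section GraphParams.
Variables (T : finType) (e : rel T).

Definition clique (K : {set T}) : bool :=
  [forall x in K, forall y in K, (x != y) ==> e x y].

Definition maxclique (K : {set T}) : bool := maxset clique K.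

Definition independent (S : {set T}) : bool :=
  [forall x in S, forall y in S, ~~ e x y].

Definition cequiv (u v : T) : bool :=
  [forall K : {set T}, maxclique K ==> ((u \in K) == (v \in K))].

Definition eqclass (v : T) : {set T} := [set u | cequiv u v].

(* vertex set of the clique-quotient graph \widetilde G *)
Definition classes : {set {set T}} := [set eqclass v | v in T].

Definition qadj (C D : {set T}) : bool :=
  (C != D) && [exists x in C, exists y in D, e x y].

Definition qdeg (C : {set T}) : nat := #|[set D in classes | qadj C D]|.

Definition tDelta : nat := \max_(C in classes) qdeg C.

Definition tomega : nat :=
  \max_(K : {set T} | maxclique K) #|[set D in classes | D :&: K != set0]|.

Definition cideg : nat :=
  \max_(v : T) #|[set K : {set T} | maxclique K & v \in K]|.

Definition cdeg : nat :=
  \max_(K : {set T} | maxclique K)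
     #|[set K' : {set T} | [&& maxclique K', K' != K & K :&: K' != set0]]|.

Definition cnbhd (v : T) : {set T} := v |: [set u | e v u].

Definition alpha_on (A : {set T}) : nat :=
  \max_(S : {set T} | (S \subset A) && independent S) #|S|.

(* The singleton cover has size
   #|A|, so #|A| is a harmless initial value for the minimum. *)
Definition theta_on (A : {set T}) : nat :=
  \big[minn/#|A|]_(P : {set {set T}} |
        [forall K in P, clique K && (K \subset A)] && (cover P == A)) #|P|.

Definition alpha_star : nat := \max_(v : T) alpha_on (cnbhd v).
Definition theta_star : nat := \max_(v : T) theta_on (cnbhd v).

Definition induced (V : finType) (a : rel V) : bool :=
  [exists f : {ffun V -> T},
     injectiveb f && [forall x, forall y, e (f x) (f y) == a x y]].

End GraphParams.

Record gseq := GSeq { gV : nat -> finType ; gA : forall n, rel (gV n) }.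

(* vertices x_1..x_n are inl i, y_1..y_n are inr i (i : 'I_n) *)
Definition XY (n : nat) : finType := ('I_n + 'I_n)%type.

Definition adjMKI n : rel (XY n) := fun a b =>
  match a, b with
  | inl i, inl j => i != j
  | inr _, inr _ => false
  | inl i, inr j | inr j, inl i => i == j
  end.

Definition adjMKK n : rel (XY n) := fun a b =>
  match a, b with
  | inl i, inl j | inr i, inr j => i != j
  | inl i, inr j | inr j, inl i => i == j
  end.

Definition adjAKK n : rel (XY n) := fun a b =>
  match a, b with
  | inl i, inl j | inr i, inr j => i != j
  | inl i, inr j | inr j, inl i => i != j
  end.

Definition adjHKK n : rel (XY n) := fun a b =>
  match a, b with
  | inl i, inl j | inr i, inr j => i != j
  | inl i, inr j | inr j, inl i => (i <= j)%N
  end.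

(* star: centre None, leaves Some i *)
Definition starV (n : nat) : finType := option 'I_n.
Definition adjS n : rel (starV n) := fun a b =>
  match a, b with
  | None, Some _ | Some _, None => true
  | _, _ => false
  end.

Definition MKI := GSeq adjMKI.
Definition MKK := GSeq adjMKK.
Definition AKK := GSeq adjAKK.
Definition HKK := GSeq adjHKK.
Definition Star := GSeq adjS.

(* p_F(G): the largest n such that some X in F has X_n as induced subgraph.
   Every graph of the families used has at least n vertices, so the maximum
   may be restricted to n <= #|T|. *)
Definition pF (F : seq gseq) (T : finType) (e : rel T) : nat :=
  \max_(n < #|T|.+1 | has (fun X : gseq => induced e (@gA X n)) F) (n : nat).

Definition frakB : seq gseq := [:: MKI; MKK; AKK; HKK; Star].

Definition pB (T : finType) (e : rel T) : nat := pF frakB e.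

Definition param_equiv (p q : forall T : finType, rel T -> nat) : Prop :=
  exists f g : nat -> nat, forall (T : finType) (e : rel T),
    symmetric e -> irreflexive e ->
    (p T e <= f (q T e))%N /\ (q T e <= g (p T e))%N.

(* Each graph of the family B induced in G contains either an independent set
   in a closed neighbourhood (the star) or a clique of pairwise inequivalent
   vertices (the x_i, separated from each other by the y_i), so p_B is at most
   max(alpha*, omega~).  Counting arguments give alpha* <= theta* <= cideg,
   cideg <= cdeg + 1, omega~ <= 2^cdeg, cdeg <= omega~ * cideg,
   cideg <= 2^Delta~ and omega~ <= Delta~ + 1.  Two Ramsey arguments close the
   cycle.  Representatives of the classes adjacent to a class of v are adjacent
   to v, so many of them contain a large clique of inequivalent vertices or the
   leaves of a large star: Delta~ is bounded by omega~ and p_B.  Inequivalent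
   vertices of a maximal clique K are separated by vertices outside K;
   repeated halving turns many of them into a half graph between vertices r_k
   of K and c_k outside K, and after a pigeonhole and two Ramsey steps the
   adjacencies only depend on the relative order of the indices, which yields
   M^KI, M^KK, A^KK, H^KK or a star of size about the number of indices: omega~
   is bounded by a function of p_B. *)

From mathcomp Require Import all_boot zify.
Set Implicit Arguments. Unset Strict Implicit. Unset Printing Implicit Defensive.

(** * Finite combinatorics *)

Definition homog (U : finType) (r : rel U) (b : bool) (A : {set U}) :=
  {in A &, forall x y, x != y -> r x y = b}.

Lemma homog_setU1 (U : finType) (r : rel U) b x (A : {set U}) : symmetric r ->
  {in A, forall y, r x y = b} -> homog r b A -> homog r b (x |: A).
Proof.
move=> rs rxA hA y z; rewrite !in_setU1.
case/predU1P => [->|yA] /predU1P[->|zA]; rewrite ?eqxx // => yz.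
- exact: rxA.
- by rewrite rs rxA.
- exact: hA.
Qed.

Lemma ramsey (U : finType) (r : rel U) : symmetric r ->
  forall a b (S : {set U}), 2 ^ (a + b) <= #|S| ->
  exists2 A : {set U}, A \subset S &
    (a <= #|A| /\ homog r true A) \/ (b <= #|A| /\ homog r false A).
Proof.
move=> rs; elim=> [|a IHa] b S hS.
  by exists set0; rewrite ?sub0set //; left; split => // x y; rewrite inE.
elim: b S hS => [|b IHb] S hS.
  by exists set0; rewrite ?sub0set //; right; split => // x y; rewrite inE.
have [x xS] : exists x, x \in S.
  by apply/set0Pn; apply: contraTneq hS => ->; rewrite cards0 -ltnNge expn_gt0.
pose N := (S :\ x) :&: [set y | r x y]; pose M := (S :\ x) :\: [set y | r x y].
have cardNM : #|N| + #|M| = #|S| - 1 by rewrite cardsID (cardsD1 x S) xS add1n subn1.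
have NS : N \subset S by apply/subsetP => y; rewrite !inE => /andP[/andP[]].
have MS : M \subset S by apply/subsetP => y; rewrite !inE => /andP[_ /andP[]].
have xN : x \notin N by rewrite !inE eqxx.
have xM : x \notin M by rewrite !inE eqxx andbF.
have [bigN|smallN] := leqP (2 ^ (a + b.+1)) #|N|.
  have [A AN [[ha hA]|hb]] := IHa b.+1 N bigN; last first.
    by exists A; [exact: subset_trans NS|right].
  exists (x |: A); first by rewrite subUset sub1set xS (subset_trans AN).
  left; split; first by rewrite cardsU1 (contra (subsetP AN x) xN) add1n ltnS.
  by apply: homog_setU1 => // y /(subsetP AN); rewrite !inE => /andP[].
have [bigM|smallM] := leqP (2 ^ (a.+1 + b)) #|M|.
  have [A AM [ha|[hb hA]]] := IHb M bigM.
    by exists A; [exact: subset_trans MS|left].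
  exists (x |: A); first by rewrite subUset sub1set xS (subset_trans AM).
  right; split; first by rewrite cardsU1 (contra (subsetP AM x) xM) add1n ltnS.
  by apply: homog_setU1 => // y /(subsetP AM); rewrite !inE => /andP[/negbTE].
move: hS smallN smallM cardNM; rewrite !addnS !addSn !expnS.
move: (2 ^ (a + b)) => q; lia.
Qed.

Definition ramsey_num n := 2 ^ (n + n).

Lemma ramsey_diag (U : finType) (r : rel U) n (S : {set U}) : symmetric r ->
  ramsey_num n <= #|S| ->
  exists b, exists2 A : {set U}, A \subset S & n <= #|A| /\ homog r b A.
Proof.
by move=> rs /(ramsey rs)[A AS [[nA hA]|[nA hA]]]; [exists true|exists false]; exists A.
Qed.

Lemma exists_large_fibre (U : finType) (S : {set U}) (f : U -> bool) :
  exists b, #|S| <= 2 * #|[set x in S | f x == b]|.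
Proof.
have fibres : #|[set x in S | f x == true]| + #|[set x in S | f x == false]| = #|S|.
  rewrite -(cardsID [set x | f x] S); congr (_ + _); apply: eq_card => x; rewrite !inE.
    by rewrite eqb_id andbC.
  by rewrite eqbF_neg andbC.
have [le|lt] := leqP #|[set x in S | f x == false]| #|[set x in S | f x == true]|.
  by exists true; lia.
by exists false; lia.
Qed.

Lemma sorted_enum_ord L (J : {set 'I_L}) : sorted (relpre val ltn) (enum J).
Proof.
apply: sorted_filter; first by move=> a b c /=; apply: ltn_trans.
by rewrite -enumT -sorted_map val_enum_ord; exact: iota_ltn_sorted.
Qed.

Lemma increasing_enum L (J : {set 'I_L}) p : p <= #|J| ->
  exists h : 'I_p -> 'I_L, (forall i, h i \in J) /\ {homo h : i j / i < j}.
Proof.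
move=> pJ; exists (fun i => enum_val (widen_ord pJ i)); split=> [i|i j ij].
  exact: enum_valP.
have x0 : 'I_L := enum_val (widen_ord pJ i); rewrite !(enum_val_nth x0).
have ltn_val_trans : transitive (relpre (val : 'I_L -> nat) ltn).
  by move=> a b c /=; apply: ltn_trans.
have := sorted_ltn_nth ltn_val_trans x0 (sorted_enum_ord J) (widen_ord pJ i) (widen_ord pJ j).
by rewrite !inE -!cardE !(leq_trans (ltn_ord _) pJ) => /(_ isT isT ij).
Qed.

Lemma card_bigcup_le (U I : finType) (A : {set I}) (F : I -> {set U}) :
  #|\bigcup_(i in A) F i| <= \sum_(i in A) #|F i|.
Proof.
apply: (big_ind2 (fun (X : {set U}) n => #|X| <= n)) => //; first by rewrite cards0.
by move=> X1 n1 X2 n2 h1 h2; apply: leq_trans (leq_card_setU _ _) (leq_add h1 h2).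
Qed.

Lemma bigminn_le_cond (I : finType) (P : pred I) (F : I -> nat) x i0 :
  P i0 -> \big[minn/x]_(i | P i) F i <= F i0.
Proof.
move=> Pi0; rewrite -big_filter.
have : i0 \in [seq i <- index_enum I | P i] by rewrite mem_filter Pi0 mem_index_enum.
elim: [seq i <- index_enum I | P i] => // i s IHs; rewrite inE big_cons.
by case/predU1P => [<-|/IHs]; [exact: geq_minl|exact: leq_trans (geq_minr _ _)].
Qed.

(** * Cliques, equivalence classes and induced subgraphs *)

Section Graph.
Variables (T : finType) (e : rel T).
Hypothesis sym_e : symmetric e.
Hypothesis irr_e : irreflexive e.

Lemma cliqueP (K : {set T}) :
  reflect {in K &, forall x y, x != y -> e x y} (clique e K).
Proof.
apply: (iffP forallP) => [H x y xK yK|H x].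
  by move: (H x); rewrite xK /= => /forallP/(_ y); rewrite yK /= => /implyP.
by apply/implyP => xK; apply/forallP => y; apply/implyP => yK; apply/implyP; apply: H.
Qed.

Lemma clique_set1 x : clique e [set x].
Proof. by apply/cliqueP => a b /set1P-> /set1P->; rewrite eqxx. Qed.

Lemma clique_set2 x y : e x y -> clique e [set x; y].
Proof.
by move=> exy; apply/cliqueP => a b /set2P[]-> /set2P[]->; rewrite ?eqxx ?(sym_e y).
Qed.

Lemma maxclique_adj K x y : maxclique e K -> x \in K -> y \in K -> x != y -> e x y.
Proof. by move/maxsetp/cliqueP; apply. Qed.

Lemma maxclique_sup Q : clique e Q -> exists2 K, maxclique e K & Q \subset K.
Proof. by case/maxset_exists => K; exists K. Qed.

Lemma maxclique_nonadj K x : maxclique e K -> x \notin K ->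
  exists2 z, z \in K & (z != x) && ~~ e z x.
Proof.
move=> mK xK; apply/exists_inP; apply: contraR xK => /exists_inP noz.
have adjK z : z \in K -> z != x -> e z x.
  by move=> zK zx; apply/negPn/negP => nezx; apply: noz; exists z; rewrite ?zx.
have cl : clique e (x |: K).
  apply/cliqueP => a b; rewrite !in_setU1.
  case/predU1P => [->|aK] /predU1P[->|bK]; rewrite ?eqxx // => ab.
  - by rewrite sym_e adjK // eq_sym.
  - exact: adjK.
  - exact: (maxclique_adj mK aK bK ab).
by rewrite -(maxsetsup mK cl (subsetUr _ _)) setU11.
Qed.

Lemma cequivP u v :
  reflect (forall K, maxclique e K -> (u \in K) = (v \in K)) (cequiv e u v).
Proof.
apply: (iffP forallP) => [H K mK|H K]; first by move: (H K); rewrite mK => /eqP.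
by apply/implyP => /H ->.
Qed.

Lemma cequivPn u v :
  reflect (exists2 K, maxclique e K & (u \in K) != (v \in K)) (~~ cequiv e u v).
Proof.
apply: (iffP forallPn) => [[K]|[K mK uvK]]; last by exists K; rewrite mK.
by rewrite negb_imply => /andP[mK uvK]; exists K.
Qed.

Lemma cequiv_refl u : cequiv e u u.
Proof. exact/cequivP. Qed.

Lemma cequiv_sym u v : cequiv e u v = cequiv e v u.
Proof. by apply/cequivP/cequivP => H K /H. Qed.

Lemma cequiv_trans u v w : cequiv e u v -> cequiv e v w -> cequiv e u w.
Proof. by move=> /cequivP uv /cequivP vw; apply/cequivP => K mK; rewrite uv ?vw. Qed.

Lemma cequiv_adj x x' u : cequiv e x x' -> e x u -> u != x' -> e x' u.
Proof.
move=> /cequivP xx' exu ux'; have [M mM sM] := maxclique_sup (clique_set2 exu).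
have x'M : x' \in M by rewrite -xx' // (subsetP sM) ?set21.
by apply: (maxclique_adj mM x'M); rewrite 1?eq_sym // (subsetP sM) ?set22.
Qed.

Lemma in_eqclass u v : (u \in eqclass e v) = cequiv e u v.
Proof. by rewrite inE. Qed.

Lemma eqclass_eq u v : (eqclass e u == eqclass e v) = cequiv e u v.
Proof.
apply/eqP/idP => [E|uv]; first by rewrite -in_eqclass -E in_eqclass cequiv_refl.
apply/setP => w; rewrite !in_eqclass; apply/idP/idP => [wu|wv].
  exact: cequiv_trans uv.
by apply: cequiv_trans wv _; rewrite cequiv_sym.
Qed.

Lemma eqclass_classes v : eqclass e v \in classes e.
Proof. exact: imset_f. Qed.

Lemma eqclass_of_mem C u : C \in classes e -> u \in C -> C = eqclass e u.
Proof.
by case/imsetP => x _ -> ux; apply/eqP; rewrite eq_sym eqclass_eq -in_eqclass.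
Qed.

Lemma eqclass_sub_maxclique M x : maxclique e M -> x \in M -> eqclass e x \subset M.
Proof. by move=> mM xM; apply/subsetP => y; rewrite in_eqclass => /cequivP ->. Qed.

Lemma eqclass_meet_maxclique M x :
  maxclique e M -> (eqclass e x :&: M != set0) = (x \in M).
Proof.
move=> mM; apply/set0Pn/idP => [[y /setIP[]]|xM]; first by rewrite in_eqclass => /cequivP ->.
by exists x; rewrite inE in_eqclass cequiv_refl.
Qed.

Definition classes_meeting (K : {set T}) := [set D in classes e | D :&: K != set0].

Lemma card_classes_meeting K : maxclique e K -> #|classes_meeting K| <= tomega e.
Proof. exact: leq_bigmax_cond. Qed.

Lemma card_inequiv_clique_le_tomega (Q : {set T}) : clique e Q ->
  {in Q &, forall u v, cequiv e u v -> u = v} -> #|Q| <= tomega e.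
Proof.
move=> cQ injQ; have [K mK sQK] := maxclique_sup cQ.
apply: leq_trans (card_classes_meeting mK).
rewrite -(card_in_imset (f := eqclass e)); last first.
  by move=> u v uQ vQ /eqP; rewrite eqclass_eq; apply: injQ.
apply/subset_leq_card/subsetP => C /imsetP[u uQ ->].
by rewrite inE eqclass_classes eqclass_meet_maxclique // (subsetP sQK).
Qed.

Lemma inducedP (V : finType) (a : rel V) :
  reflect (exists f : V -> T, injective f /\ forall x y, e (f x) (f y) = a x y)
          (induced e a).
Proof.
apply: (iffP existsP) => [[f /andP[/injectiveP fi /forallP H]]|[f [fi H]]].
  by exists f; split => // x y; move/forallP: (H x) => /(_ y)/eqP.
exists [ffun x => f x]; apply/andP; split.
  by apply/injectiveP => x y; rewrite !ffunE; apply: fi.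
by apply/forallP => x; apply/forallP => y; rewrite !ffunE H.
Qed.

Lemma induced_card (V : finType) (a : rel V) : induced e a -> #|V| <= #|T|.
Proof. by case/inducedP => f [fi _]; apply: leq_card fi. Qed.

Lemma induced_XY n (a : rel (XY n)) (x y : 'I_n -> T) :
  injective x -> injective y -> (forall i j, x i != y j) ->
  (forall i j, e (x i) (x j) = a (inl i) (inl j)) ->
  (forall i j, e (y i) (y j) = a (inr i) (inr j)) ->
  (forall i j, e (x i) (y j) = a (inl i) (inr j)) ->
  (forall i j, a (inr j) (inl i) = a (inl i) (inr j)) -> induced e a.
Proof.
move=> xi yi xy exx eyy exy asym; apply/inducedP.
exists (fun z : XY n => match z with inl i => x i | inr j => y j end); split.
  case=> [i|i] [j|j] /= E; first by rewrite (xi _ _ E).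
  - by move: (xy i j); rewrite E eqxx.
  - by move: (xy j i); rewrite E eqxx.
  - by rewrite (yi _ _ E).
by case=> [i|i] [j|j]; rewrite /= ?exx ?eyy ?exy // sym_e exy asym.
Qed.

Lemma induced_star n (c : T) (y : 'I_n -> T) :
  injective y -> (forall j, c != y j) -> (forall j, e c (y j)) ->
  (forall i j, ~~ e (y i) (y j)) -> induced e (@adjS n).
Proof.
move=> yi cy ecy nyy; apply/inducedP.
exists (fun z : starV n => if z is Some j then y j else c); split.
  case=> [i|] [j|] //= E; first by rewrite (yi _ _ E).
  - by move: (cy i); rewrite E eqxx.
  - by move: (cy j); rewrite E eqxx.
by case=> [i|] [j|]; rewrite /= ?irr_e ?ecy ?(negbTE (nyy _ _)) // sym_e ecy.
Qed.

Lemma pB_ge n : has (fun X : gseq => induced e (@gA X n)) frakB -> n <= pB e.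
Proof.
move=> H; suff nT : n < #|T|.+1 by apply: (leq_bigmax_cond (Ordinal nT)).
have cardXY (a : rel (XY n)) : induced e a -> n <= #|T|.
  by move/induced_card; apply: leq_trans; rewrite card_sum card_ord leq_addr.
have cardS (a : rel (starV n)) : induced e a -> n <= #|T|.
  by move/induced_card; apply: leq_trans; rewrite card_option card_ord.
by move: H => /=; rewrite orbF ltnS; case/or4P => [|||/orP[]]; [exact: cardXY..|exact: cardS].
Qed.

Lemma pB_MKI n : induced e (@adjMKI n) -> n <= pB e.
Proof. by move=> H; apply: pB_ge; rewrite /= H. Qed.

Lemma pB_MKK n : induced e (@adjMKK n) -> n <= pB e.
Proof. by move=> H; apply: pB_ge; rewrite /= H !orbT. Qed.

Lemma pB_AKK n : induced e (@adjAKK n) -> n <= pB e.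
Proof. by move=> H; apply: pB_ge; rewrite /= H !orbT. Qed.

Lemma pB_HKK n : induced e (@adjHKK n) -> n <= pB e.
Proof. by move=> H; apply: pB_ge; rewrite /= H !orbT. Qed.

Lemma pB_star n : induced e (@adjS n) -> n <= pB e.
Proof. by move=> H; apply: pB_ge; rewrite /= H !orbT. Qed.

Lemma XY_le_tomega n (a : rel (XY n)) :
  (forall i j, a (inl i) (inl j) = (i != j)) ->
  (forall i j, a (inr j) (inl i) = a (inl i) (inr j)) ->
  (forall i j : 'I_n, i < j ->
     exists k, a (inl i) (inr k) && ~~ a (inl j) (inr k)) ->
  induced e a -> n <= tomega e.
Proof.
move=> axx asym sep /inducedP[f [fi fe]].
have xi : injective (fun i => f (inl i)) by move=> i j /fi [].
have inequiv (i j : 'I_n) : i < j -> ~~ cequiv e (f (inl i)) (f (inl j)).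
  case/sep => k /andP[aik ajk]; apply/negP => ij.
  have := @cequiv_adj _ _ (f (inr k)) ij; rewrite fe aik sym_e fe asym (negbTE ajk).
  have kj : f (inr k) != f (inl j) by apply/eqP => /fi.
  by move/(_ isT kj).
have := @card_inequiv_clique_le_tomega [set f (inl i) | i : 'I_n].
rewrite card_imset // card_ord; apply.
  apply/cliqueP => x y /imsetP[i _ ->] /imsetP[j _ ->] fij.
  by rewrite fe axx; apply: contraNneq fij => ->.
move=> x y /imsetP[i _ ->] /imsetP[j _ ->] ij.
by case: (ltngtP i j) => [/inequiv|/inequiv|/val_inj -> //]; rewrite ?ij // cequiv_sym ij.
Qed.

Lemma MKI_le_tomega n : induced e (@adjMKI n) -> n <= tomega e.
Proof.
apply: XY_le_tomega => // i j ij; exists i.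
by rewrite /= eqxx; apply: contraTneq ij => ->; rewrite ltnn.
Qed.

Lemma MKK_le_tomega n : induced e (@adjMKK n) -> n <= tomega e.
Proof.
apply: XY_le_tomega => // i j ij; exists i.
by rewrite /= eqxx; apply: contraTneq ij => ->; rewrite ltnn.
Qed.

Lemma AKK_le_tomega n : induced e (@adjAKK n) -> n <= tomega e.
Proof.
apply: XY_le_tomega => // i j ij; exists j.
by rewrite /= eqxx andbT; apply: contraTneq ij => ->; rewrite ltnn.
Qed.

Lemma HKK_le_tomega n : induced e (@adjHKK n) -> n <= tomega e.
Proof. by apply: XY_le_tomega => // i j ij; exists i; rewrite /= leqnn -ltnNge. Qed.

Lemma star_le_alpha_star n : induced e (@adjS n) -> n <= alpha_star e.
Proof.
move=> /inducedP[f [fi fe]].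
have leaves_inj : injective (fun i => f (Some i)) by move=> i j /fi [].
apply: leq_trans (leq_bigmax (f None)).
apply: (@leq_trans #|[set f (Some i) | i : 'I_n]|); first by rewrite card_imset // card_ord.
apply: leq_bigmax_cond; apply/andP; split.
  by apply/subsetP => x /imsetP[i _ ->]; rewrite !inE fe orbT.
apply/forallP => x; apply/implyP => /imsetP[i _ ->].
by apply/forallP => y; apply/implyP => /imsetP[j _ ->]; rewrite fe.
Qed.

Lemma pB_le_alpha_star_tomega : pB e <= maxn (alpha_star e) (tomega e).
Proof.
apply/bigmax_leqP => n /=; rewrite orbF leq_max.
case/or4P => [H|H|H|/orP[H|H]].
- by rewrite MKI_le_tomega ?orbT.
- by rewrite MKK_le_tomega ?orbT.
- by rewrite AKK_le_tomega ?orbT.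
- by rewrite HKK_le_tomega ?orbT.
- by rewrite star_le_alpha_star.
Qed.

(** * Elementary inequalities between the parameters *)

Lemma independentP (S : {set T}) :
  reflect {in S &, forall x y, ~~ e x y} (independent e S).
Proof.
apply: (iffP forallP) => [H x y xS yS|H x].
  by move: (H x); rewrite xS /= => /forallP/(_ y); rewrite yS.
by apply/implyP => xS; apply/forallP => y; apply/implyP; apply: H.
Qed.

Lemma card_clique_independent (K S : {set T}) :
  clique e K -> independent e S -> #|K :&: S| <= 1.
Proof.
move=> /cliqueP cK /independentP iS.
apply/card_le1_eqP => x y /setIP[xK xS] /setIP[yK yS].
by apply/eqP; apply: contraNT (iS _ _ yS xS); apply: cK.
Qed.

Lemma alpha_on_le_theta_on A : alpha_on e A <= theta_on e A.
Proof.
apply/bigmax_leqP => S /andP[sSA iS].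
apply: (big_ind (fun m => #|S| <= m)); first exact: subset_leq_card.
  by move=> m1 m2 h1 h2; rewrite leq_min h1 h2.
move=> P /andP[/forall_inP cP /eqP coverP].
have -> : S = \bigcup_(K in P) (K :&: S).
  by rewrite -big_distrl /= -/(cover P) coverP (setIidPr sSA).
apply: leq_trans (card_bigcup_le _ _) _; rewrite -sum1_card leq_sum // => K.
by case/cP/andP => cK _; apply: card_clique_independent.
Qed.

Lemma alpha_star_le_theta_star : alpha_star e <= theta_star e.
Proof.
by apply/bigmax_leqP => v _; apply: leq_trans (alpha_on_le_theta_on _) (leq_bigmax v).
Qed.

Definition maxcliques_at v := [set K | maxclique e K & v \in K].

Lemma card_maxcliques_at v : #|maxcliques_at v| <= cideg e.
Proof. exact: leq_bigmax. Qed.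

Lemma maxcliques_at_sub_cnbhd v K : K \in maxcliques_at v -> K \subset cnbhd e v.
Proof.
rewrite inE => /andP[mK vK]; apply/subsetP => u uK; rewrite !inE.
by case: eqVneq => //= uv; apply: (maxclique_adj mK); rewrite // eq_sym.
Qed.

Lemma cover_maxcliques_at v : cover (maxcliques_at v) = cnbhd e v.
Proof.
apply/eqP; rewrite eqEsubset; apply/andP; split.
  by apply/bigcupsP => K /maxcliques_at_sub_cnbhd.
apply/subsetP => u; rewrite !inE => /predU1P[->|evu].
  have [K mK sK] := maxclique_sup (clique_set1 v).
  by apply/bigcupP; exists K; rewrite ?inE ?mK ?(subsetP sK) ?set11.
have [K mK sK] := maxclique_sup (clique_set2 evu).
by apply/bigcupP; exists K; rewrite ?inE ?mK ?(subsetP sK) ?set21 ?set22.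
Qed.

Lemma theta_star_le_cideg : theta_star e <= cideg e.
Proof.
apply/bigmax_leqP => v _; apply: leq_trans (card_maxcliques_at v).
apply: bigminn_le_cond; rewrite cover_maxcliques_at eqxx andbT.
apply/forall_inP => K KM; rewrite maxcliques_at_sub_cnbhd // andbT.
by move: KM; rewrite inE => /andP[/maxsetp].
Qed.

Definition maxclique_nbrs (K : {set T}) :=
  [set K' : {set T} | [&& maxclique e K', K' != K & K :&: K' != set0]].

Lemma card_maxclique_nbrs K : maxclique e K -> #|maxclique_nbrs K| <= cdeg e.
Proof. exact: leq_bigmax_cond. Qed.

Lemma cideg_le_cdeg : cideg e <= (cdeg e).+1.
Proof.
apply/bigmax_leqP => v _; rewrite -/(maxcliques_at v).
have [->|[K KM]] := set_0Vmem (maxcliques_at v); first by rewrite cards0.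
have := KM; rewrite inE => /andP[mK vK].
apply: (@leq_trans #|K |: maxclique_nbrs K|).
  apply/subset_leq_card/subsetP => M; rewrite !inE => /andP[mM vM].
  by case: eqVneq => //= _; rewrite mM; apply/set0Pn; exists v; rewrite inE vK.
by rewrite cardsU1 -add1n leq_add ?leq_b1 ?card_maxclique_nbrs.
Qed.

Lemma classes_meetingP (K D : {set T}) :
  reflect (exists2 u, u \in K & D = eqclass e u) (D \in classes_meeting K).
Proof.
apply: (iffP idP) => [|[u uK ->]]; last first.
  rewrite inE eqclass_classes; apply/set0Pn.
  by exists u; rewrite inE in_eqclass cequiv_refl.
rewrite inE => /andP[Dc /set0Pn[u /setIP[uD uK]]].
by exists u; rewrite ?(eqclass_of_mem Dc uD).
Qed.

Lemma tomega_le_exp_cdeg : tomega e <= 2 ^ cdeg e.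
Proof.
apply/bigmax_leqP => K mK; rewrite -/(classes_meeting K).
pose phi D := [set M in maxclique_nbrs K | D :&: M != set0].
rewrite -(@card_in_imset _ _ phi); last first.
  move=> _ _ /classes_meetingP[u1 u1K ->] /classes_meetingP[u2 u2K ->] /setP E.
  apply/eqP; rewrite eqclass_eq; apply/negPn/cequivPn => -[M mM u12M].
  have [u uK uM] : exists2 u, u \in K & u \in M.
    have [u1M|u1M] := boolP (u1 \in M); first by exists u1.
    by exists u2 => //; move: u12M; rewrite (negbTE u1M); case: (u2 \in M).
  have MK : M \in maxclique_nbrs K.
    rewrite inE mM /=; apply/andP; split; last by apply/set0Pn; exists u; rewrite inE uK.
    by apply: contraNneq u12M => ->; rewrite u1K u2K.
  move: MK (E M) u12M; rewrite !inE => -> /=.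
  by rewrite !eqclass_meet_maxclique // => ->; rewrite eqxx.
apply: (@leq_trans #|powerset (maxclique_nbrs K)|).
  apply/subset_leq_card/subsetP => _ /imsetP[D _ ->].
  by rewrite inE; apply/subsetP => M; rewrite inE => /andP[].
by rewrite card_powerset leq_pexp2l // card_maxclique_nbrs.
Qed.

Lemma cdeg_le_tomega_cideg : cdeg e <= tomega e * cideg e.
Proof.
apply/bigmax_leqP => K mK.
pose meeting D := [set M | maxclique e M & D :&: M != set0].
apply: (@leq_trans #|\bigcup_(D in classes_meeting K) meeting D|).
  apply/subset_leq_card/subsetP => M; rewrite inE => /and3P[mM _ /set0Pn[u /setIP[uK uM]]].
  apply/bigcupP; exists (eqclass e u); first by apply/classes_meetingP; exists u.
  by rewrite inE mM eqclass_meet_maxclique.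
apply: leq_trans (card_bigcup_le _ _) _.
apply: (@leq_trans (\sum_(D in classes_meeting K) cideg e)).
  apply: leq_sum => _ /classes_meetingP[u _ ->]; apply: leq_trans (card_maxcliques_at u).
  apply/subset_leq_card/subsetP => M; rewrite !inE => /andP[mM].
  by rewrite eqclass_meet_maxclique // mM.
by rewrite sum_nat_const leq_mul2r card_classes_meeting ?orbT.
Qed.

Definition qnbrs (C : {set T}) := [set D in classes e | qadj e C D].

Lemma card_qnbrs C : C \in classes e -> #|qnbrs C| <= tDelta e.
Proof. exact: leq_bigmax_cond. Qed.

Lemma eqclass_qnbrs u v :
  e v u -> ~~ cequiv e u v -> eqclass e u \in qnbrs (eqclass e v).
Proof.
move=> evu uv; rewrite inE eqclass_classes /qadj eqclass_eq cequiv_sym uv /=.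
apply/exists_inP; exists v; rewrite ?in_eqclass ?cequiv_refl //.
by apply/exists_inP; exists u; rewrite ?in_eqclass ?cequiv_refl.
Qed.

Lemma tomega_le_tDelta : tomega e <= (tDelta e).+1.
Proof.
apply/bigmax_leqP => K mK; rewrite -/(classes_meeting K).
have [->|[_ /classes_meetingP[u0 u0K _]]] := set_0Vmem (classes_meeting K).
  by rewrite cards0.
apply: (@leq_trans #|eqclass e u0 |: qnbrs (eqclass e u0)|).
  apply/subset_leq_card/subsetP => _ /classes_meetingP[u uK ->].
  rewrite in_setU1 eqclass_eq.
  case: (boolP (cequiv e u u0)) => //= uu0; apply: eqclass_qnbrs => //.
  by apply: (maxclique_adj mK) => //; apply: contraNneq uu0 => ->; exact: cequiv_refl.
by rewrite cardsU1 -add1n leq_add ?leq_b1 ?card_qnbrs ?eqclass_classes.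
Qed.

Lemma cideg_le_exp_tDelta : cideg e <= 2 ^ tDelta e.
Proof.
apply/bigmax_leqP => v _; rewrite -/(maxcliques_at v).
pose psi (M : {set T}) := [set D in qnbrs (eqclass e v) | D \subset M].
have psi_sub M1 M2 : M1 \in maxcliques_at v -> M2 \in maxcliques_at v ->
    psi M1 = psi M2 -> M1 \subset M2.
  rewrite !inE => /andP[mM1 vM1] /andP[mM2 vM2] E.
  apply/subsetP => u uM1; have [/cequivP -> //|uv] := boolP (cequiv e u v).
  have : eqclass e u \in psi M1.
    rewrite inE eqclass_sub_maxclique // andbT eqclass_qnbrs //.
    by apply: (maxclique_adj mM1) => //; apply: contraNneq uv => ->; exact: cequiv_refl.
  by rewrite E inE => /andP[_ /subsetP]; apply; rewrite in_eqclass cequiv_refl.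
rewrite -(@card_in_imset _ _ psi); last first.
  by move=> M1 M2 h1 h2 E; apply/eqP; rewrite eqEsubset !psi_sub.
apply: (@leq_trans #|powerset (qnbrs (eqclass e v))|).
  apply/subset_leq_card/subsetP => _ /imsetP[M _ ->].
  by rewrite inE; apply/subsetP => D; rewrite inE => /andP[].
by rewrite card_powerset leq_pexp2l // card_qnbrs ?eqclass_classes.
Qed.

(** * Bounding the quotient degree and clique number by p_B *)

Lemma classes_transversal (X : {set T}) (Ds : {set {set T}}) :
  Ds \subset classes e -> {in Ds, forall D, D :&: X != set0} ->
  exists R : {set T}, [/\ R \subset X, #|R| = #|Ds|,
    {in R &, forall u u', cequiv e u u' -> u = u'} &
    {in R, forall u, eqclass e u \in Ds}].
Proof.
move=> DsC DsX; have [->|[D0 D0Ds]] := set_0Vmem Ds.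
  by exists set0; split=> [||u|u]; rewrite ?sub0set ?cards0 ?inE.
have [u0 _] := set0Pn _ (DsX _ D0Ds).
pose rep D := odflt u0 [pick u in D :&: X].
have repP D : D \in Ds -> rep D \in D :&: X.
  by move/DsX/set0Pn => [u uDX]; rewrite /rep; case: pickP => [//|/(_ u)]; rewrite uDX.
have repE D : D \in Ds -> D = eqclass e (rep D).
  move=> DDs; have /setIP[rD _] := repP D DDs.
  exact: eqclass_of_mem (subsetP DsC _ DDs) rD.
have rep_inj : {in Ds &, injective rep} by move=> D D' /repE {2}-> /repE {2}-> ->.
exists (rep @: Ds); split.
- by apply/subsetP => _ /imsetP[D /repP /setIP[_ rX] ->].
- exact: card_in_imset.
- move=> _ _ /imsetP[D DDs ->] /imsetP[D' DDs' ->].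
  by rewrite -eqclass_eq -(repE _ DDs) -(repE _ DDs') => /eqP ->.
- by move=> _ /imsetP[D DDs ->]; rewrite -repE.
Qed.

Lemma card_independent_nbrs_le_pB v (A : {set T}) :
  A \subset [set u | e v u] -> homog e false A -> #|A| <= pB e.
Proof.
move=> Av hA; have vA (j : 'I_#|A|) : e v (enum_val j).
  by move: (subsetP Av _ (enum_valP j)); rewrite inE.
apply: pB_star; apply: (@induced_star _ v (@enum_val _ (mem A))) => [|j|//|i j].
- exact: enum_val_inj.
- by apply: contraTneq (vA j) => <-; rewrite irr_e.
- have [<-|ij] := eqVneq i j; first by rewrite irr_e.
  by rewrite hA ?enum_valP //; apply: contra ij => /eqP/enum_val_inj ->.
Qed.

Lemma card_inequiv_clique_nbrs_lt_tomega v (A : {set T}) :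
  A \subset [set u | e v u] -> homog e true A ->
  {in A &, forall u u', cequiv e u u' -> u = u'} ->
  {in A, forall u, ~~ cequiv e u v} -> #|A| < tomega e.
Proof.
move=> Av hA injA Anv; have adj u : u \in A -> e v u by move/(subsetP Av); rewrite inE.
have vA : v \notin A by apply: contraT => /negbNE/adj; rewrite irr_e.
suff : #|v |: A| <= tomega e by rewrite cardsU1 vA.
apply: card_inequiv_clique_le_tomega.
  apply/cliqueP => x y; rewrite !in_setU1 => /predU1P[->|xA] /predU1P[->|yA];
    rewrite ?eqxx // => xy; by [exact: adj|rewrite sym_e adj|rewrite hA].
move=> x y; rewrite !in_setU1 => /predU1P[->|xA] /predU1P[->|yA] //.
- by rewrite cequiv_sym => /(negP (Anv y yA)).
- by move=> /(negP (Anv x xA)).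
- exact: injA.
Qed.

Lemma card_qnbrs_lt v :
  #|qnbrs (eqclass e v)| < ramsey_num (maxn (tomega e) (pB e).+1).
Proof.
have qnbrs_classes : qnbrs (eqclass e v) \subset classes e.
  by apply/subsetP => D; rewrite inE => /andP[].
have qnbrs_meet : {in qnbrs (eqclass e v), forall D, D :&: [set u | e v u] != set0}.
  move=> D; rewrite inE => /andP[DC /andP[vD /exists_inP[x xv /exists_inP[y yD exy]]]].
  have yv : y != v by apply: contraNneq vD => yv; rewrite (eqclass_of_mem DC yD) yv.
  by apply/set0Pn; exists y; rewrite !inE yD (cequiv_adj _ exy) // -in_eqclass.
have [R [Rv <- Rinj Rq]] := classes_transversal qnbrs_classes qnbrs_meet.
rewrite ltnNge; apply/negP => /(ramsey_diag sym_e)[[] [A AR [mA hA]]].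
- suff : #|A| < tomega e by rewrite ltnNge (leq_trans (leq_maxl _ _) mA).
  apply: card_inequiv_clique_nbrs_lt_tomega (subset_trans AR Rv) hA _ _.
  + by move=> u u' /(subsetP AR) uR /(subsetP AR); apply: Rinj.
  + move=> u /(subsetP AR)/Rq; rewrite inE => /andP[_ /andP[]].
    by rewrite eqclass_eq cequiv_sym.
- have := card_independent_nbrs_le_pB (subset_trans AR Rv) hA.
  by rewrite leqNgt (leq_trans (leq_maxr _ _) mA).
Qed.

Lemma tDelta_le_ramsey : tDelta e <= ramsey_num (maxn (tomega e) (pB e).+1).
Proof. by apply/bigmax_leqP => _ /imsetP[v _ ->]; apply/ltnW/card_qnbrs_lt. Qed.

Section Pattern.
Variables (n : nat) (x y : 'I_n.+1 -> T) (b be ga : bool).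
Hypothesis x_clique : forall i j, i != j -> e (x i) (x j).
Hypothesis y_homog : forall i j, i != j -> e (y i) (y j) = ga.
Hypothesis y_inj : injective y.
Hypothesis x_neq_y : forall i j, x i != y j.
Hypothesis xy_pattern :
  forall i j, e (x i) (y j) = if i == j then ~~ b else if j < i then b else be.

Lemma pattern_x_inj : injective x.
Proof. by move=> i j xij; apply/eqP; apply: contraT => /x_clique; rewrite xij irr_e. Qed.

Lemma pattern_induced_XY m (a : rel (XY m)) (f g : 'I_m -> 'I_n.+1) :
  injective f -> injective g ->
  (forall i j, a (inl i) (inl j) = (i != j)) ->
  (forall i j, a (inr i) (inr j) = ga && (i != j)) ->
  (forall i j, e (x (f i)) (y (g j)) = a (inl i) (inr j)) ->
  (forall i j, a (inr j) (inl i) = a (inl i) (inr j)) -> induced e a.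
Proof.
move=> fi gi axx ayy exy asym; apply: induced_XY exy asym => [i j|i j|i j|i j|i j].
- by move/pattern_x_inj/fi.
- by move/y_inj/gi.
- exact: x_neq_y.
- rewrite axx; have [->|ij] := eqVneq i j; first by rewrite irr_e.
  by apply: x_clique; rewrite (inj_eq fi).
- rewrite ayy; have [->|ij] := eqVneq i j; first by rewrite irr_e andbF.
  by rewrite y_homog ?andbT ?(inj_eq gi).
Qed.

Lemma pattern_induced_star m c (g : 'I_m -> 'I_n.+1) :
  ~~ ga -> injective g -> (forall j, e (x c) (y (g j))) -> induced e (@adjS m).
Proof.
move=> gaF gi xy; apply: (induced_star (y := fun j => y (g j))) => // [i j|i j].
  by move/y_inj/gi.
by have [->|ij] := eqVneq i j; [rewrite irr_e|rewrite y_homog ?(inj_eq gi)].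
Qed.

Lemma pattern_clique_le_pB : ga -> n <= pB e.
Proof.
move=> gaT; have idI : injective (@id 'I_n.+1) by [].
move: xy_pattern; case: b; case: be => xy.
- apply/ltnW/pB_AKK; apply: (pattern_induced_XY idI idI) => // i j;
  by rewrite ?gaT // xy /=; case: eqP => //; case: (j < i).
- (* reversing both index orders turns [j < i] into [i <= j] *)
  pose f (i : 'I_n) := lift ord0 (rev_ord i).
  pose g (j : 'I_n) := widen_ord (leqnSn n) (rev_ord j).
  have fI : injective f by move=> i j /lift_inj/rev_ord_inj.
  have gI : injective g by move=> i j /(congr1 val) ij; apply/rev_ord_inj/val_inj.
  apply: pB_HKK; apply: (pattern_induced_XY fI gI) => // i j;
    rewrite ?gaT // xy -val_eqE /= /bump leq0n add1n.
  have := ltn_ord i; have := ltn_ord j; case: eqP => [E|_] jn ilt.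
    by apply/esym/negbTE; rewrite -ltnNge; lia.
  by case: ifP => h; apply/esym; [apply/idP|apply/negbTE/negP]; lia.
- apply/ltnW/pB_HKK; apply: (pattern_induced_XY idI idI) => // i j;
  rewrite ?gaT // xy /=; case: eqP => [->|_]; first by rewrite leqnn.
  by rewrite [i <= j]leqNgt; case: (j < i).
- apply/ltnW/pB_MKK; apply: (pattern_induced_XY idI idI) => // i j;
  by rewrite ?gaT // xy /=; case: eqP => //; case: (j < i).
Qed.

Lemma pattern_independent_le_pB : ~~ ga -> n <= pB e.
Proof.
move=> gaF; have idI : injective (@id 'I_n.+1) by [].
move: xy_pattern; case: b; case: be => xy.
- apply: pB_star; apply: (pattern_induced_star (c := ord0) gaF (@lift_inj _ ord0)) => j.
  by rewrite xy (negbTE (neq_lift _ _)) ltn0.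
- have wI : injective (widen_ord (leqnSn n)).
    by move=> i j /(congr1 val) ij; apply: val_inj.
  apply: pB_star; apply: (pattern_induced_star (c := ord_max) gaF wI) => j.
  by rewrite xy -val_eqE /= (gtn_eqF (ltn_ord j)) ltn_ord.
- apply/ltnW/pB_star; apply: (pattern_induced_star (c := ord0) gaF idI) => j.
  by rewrite xy; case: eqP.
- apply/ltnW/pB_MKI; apply: (pattern_induced_XY idI idI) => // i j;
  by rewrite ?(negbTE gaF) // xy /=; case: eqP => //; case: (j < i).
Qed.

Lemma pattern_le_pB : n <= pB e.
Proof. by have [/pattern_clique_le_pB|/pattern_independent_le_pB] := boolP ga. Qed.

End Pattern.

Lemma maxclique_inequiv_separated K u u' : maxclique e K -> u \in K -> u' \in K ->
  ~~ cequiv e u u' -> exists2 z, z \notin K & e u z != e u' z.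
Proof.
move=> mK uK u'K /cequivPn[M mM].
wlog uM : u u' uK u'K / u \in M => [hw uu'|uu'].
  have [uM|uM] := boolP (u \in M); first exact: hw.
  have u'M : u' \in M by move: uu'; rewrite (negbTE uM); case: (u' \in M).
  have [|z zK zuu'] := hw u' u u'K uK u'M; first by rewrite eq_sym.
  by exists z; rewrite // eq_sym.
have u'M : u' \notin M by move: uu'; rewrite uM; case: (u' \in M).
have [z zM /andP[zu' nezu']] := maxclique_nonadj mM u'M.
have uu'E : u != u' by apply: contraNneq u'M => <-.
have zu : z != u by apply: contraNneq nezu' => ->; rewrite (maxclique_adj mK).
exists z; first by apply: contra nezu' => zK; rewrite (maxclique_adj mK).
by rewrite (maxclique_adj mM) 1?eq_sym // sym_e (negbTE nezu').
Qed.

(* Split [S] by adjacency to a vertex [z] separating two of its members, keep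
   the larger half and record [c k := z] and a member [r k] of the other half:
   then [c k] sees [r k] differently from every later [r l]. *)
Lemma halving_sequence (K S : {set T}) (x0 : T) L :
  {in S &, forall u u', u != u' -> exists2 z, z \notin K & e u z != e u' z} ->
  2 ^ L <= #|S| ->
  exists r c : nat -> T, exists d : nat -> bool, forall k, k < L ->
    [/\ r k \in S, c k \notin K, e (r k) (c k) = ~~ d k &
        forall l, k < l < L -> e (r l) (c k) = d k].
Proof.
elim: L S => [|L IH] S sepS hS.
  by exists (fun _ => x0), (fun _ => x0), (fun _ => true).
have [u [u' [uS u'S uu']]] : exists u u', [/\ u \in S, u' \in S & u != u'].
  by apply/card_gt1P; apply: leq_trans hS; rewrite expnS; have := expn_gt0 2 L; lia.
have [z zK uz] := sepS u u' uS u'S uu'.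
have [b hb] := exists_large_fibre S (e^~ z).
set Sb := [set x in S | _] in hb.
have {}hb : 2 ^ L <= #|Sb| by move: hS hb; rewrite expnS; move: (2 ^ L) => q; lia.
have [w wS wz] : exists2 w, w \in S & e w z = ~~ b.
  have [|ub] := eqVneq (e u z) (~~ b); first by exists u.
  by exists u' => //; move: uz ub {hb Sb}; case: (e u z); case: (e u' z); case: b.
have SbS : Sb \subset S by apply/subsetP => x; rewrite inE => /andP[].
have [r [c [d H]]] := IH Sb (sub_in2 (subsetP SbS) sepS) hb.
exists (fun k => if k is k'.+1 then r k' else w), (fun k => if k is k'.+1 then c k' else z).
exists (fun k => if k is k'.+1 then d k' else b).
case=> [|k] /=; rewrite ?ltnS => kL.
  split=> // -[|l] //= lL.
  by have [/[!inE] /andP[_ /eqP]] := H l lL.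
have [rSb cK rc Hl] := H k kL; split=> //; first exact: (subsetP SbS).
by case=> [|l] //; apply: Hl.
Qed.

Section HalfGraph.
Variables (K : {set T}) (L : nat) (r c : nat -> T) (d : nat -> bool).
Hypothesis mK : maxclique e K.
Hypothesis rK : forall k, k < L -> r k \in K.
Hypothesis cK : forall k, k < L -> c k \notin K.
Hypothesis rc_diag : forall k, k < L -> e (r k) (c k) = ~~ d k.
Hypothesis rc_below : forall k l, k < l < L -> e (r l) (c k) = d k.

Lemma half_graph_r_neq k l : k < l < L -> r k != r l.
Proof.
move=> /andP[kl lL]; apply/eqP => rkl.
move: (rc_diag (ltn_trans kl lL)) (rc_below (introT andP (conj kl lL))).
by rewrite rkl => ->; case: (d k).
Qed.

Lemma half_graph_c_neq k l : k < l < L -> d k = d l -> c k != c l.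
Proof.
move=> /andP[kl lL] dkl; apply/eqP => ckl.
move: (rc_diag lL) (rc_below (introT andP (conj kl lL))).
by rewrite ckl dkl => ->; case: (d l).
Qed.

Lemma half_graph_pattern_le_pB n (h : 'I_n.+1 -> 'I_L) (b be ga : bool) :
  {homo h : i j / i < j} -> (forall i, d (h i) = b) ->
  (forall i j : 'I_n.+1, i < j -> e (r (h i)) (c (h j)) = be) ->
  (forall i j : 'I_n.+1, i != j -> e (c (h i)) (c (h j)) = ga) -> n <= pB e.
Proof.
move=> hI db rcbe ccga.
apply: (@pattern_le_pB n (fun i => r (h i)) (fun i => c (h i)) b be ga) => //
  [i j ij|i j /eqP cij|i j|i j].
- apply: (maxclique_adj mK); rewrite ?rK //.
  move: ij; rewrite -val_eqE neq_ltn => /orP[] /hI hij; [|rewrite eq_sym];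
    by apply: half_graph_r_neq; rewrite hij /=.
- apply/eqP; apply: contraTT cij; rewrite -val_eqE neq_ltn => /orP[] /hI hij;
    [|rewrite eq_sym]; by apply: half_graph_c_neq; rewrite ?hij ?ltn_ord ?db.
- by apply/eqP => rc; move: (cK (ltn_ord (h j))); rewrite -rc rK.
- rewrite -val_eqE; case: (ltngtP i j) => [ij|ji|/val_inj ->]; first exact: rcbe.
  + by rewrite rc_below ?hI ?ltn_ord // db.
  + by rewrite rc_diag // db.
Qed.

Lemma half_graph_length_lt : L < 2 * ramsey_num (ramsey_num (pB e).+2).
Proof.
rewrite ltnNge; apply/negP => bigL.
have [b Ib] := exists_large_fibre [set: 'I_L] (fun k => d k).
set I := [set k in _ | _] in Ib; rewrite cardsT card_ord in Ib.
(* The pigeonhole on [d] fixes the adjacency of [r] to [c] below the diagonal;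
   Ramsey for [upper] fixes it above the diagonal, and Ramsey again fixes the
   adjacency among the [c k]. *)
pose upper (k l : 'I_L) := if k < l then e (r k) (c l) else e (r l) (c k).
have upper_sym : symmetric upper.
  by move=> k l; rewrite /upper; case: (ltngtP k l) => // /val_inj ->.
have NI : ramsey_num (ramsey_num (pB e).+2) <= #|I|.
  by rewrite -(leq_pmul2l (isT : 0 < 2)) (leq_trans bigL Ib).
have [be [H HI [Hc upperH]]] := ramsey_diag upper_sym NI.
have cc_sym : symmetric (fun k l : 'I_L => e (c k) (c l)) by move=> k l; rewrite sym_e.
have [ga [J JH [Jc ccJ]]] := ramsey_diag cc_sym Hc.
have [h [hJ hI]] := increasing_enum Jc.
have h_inj : injective h.
  move=> i j hij; apply/eqP; apply: contraT; rewrite -val_eqE neq_ltn.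
  by case/orP => /hI; rewrite hij ltnn.
have hH i : h i \in H by apply: (subsetP JH).
suff : (pB e).+1 <= pB e by rewrite ltnn.
apply: (half_graph_pattern_le_pB (b := b) (be := be) (ga := ga) hI) => [i|i j ij|i j ij].
- by have := subsetP HI _ (hH i); rewrite !inE => /eqP.
- by rewrite -(upperH (h i) (h j)) ?hH /upper ?hI // (inj_eq h_inj) -val_eqE ltn_eqF.
- by apply: (ccJ (h i) (h j) (hJ i) (hJ j)); rewrite (inj_eq h_inj).
Qed.

End HalfGraph.

(* [2 ^ L] vertices feed [halving_sequence]; then the pigeonhole halves [L] and
   two Ramsey steps leave [q + 2] indices, one more than [pattern_le_pB] allows. *)
Definition tomega_bound q := 2 ^ (2 * ramsey_num (ramsey_num q.+2)).

Lemma card_classes_meeting_lt K :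
  maxclique e K -> #|classes_meeting K| < tomega_bound (pB e).
Proof.
move=> mK; have [|D|R [RK <- Rinj _]] := @classes_transversal K (classes_meeting K).
- by apply/subsetP => D; rewrite inE => /andP[].
- by rewrite inE => /andP[].
rewrite ltnNge; apply/negP => bigR.
have sepR : {in R &, forall u u', u != u' -> exists2 z, z \notin K & e u z != e u' z}.
  move=> u u' uR u'R uu'; apply: maxclique_inequiv_separated; rewrite ?(subsetP RK) //.
  by apply: contra uu' => /(Rinj _ _ uR u'R) ->.
have [x0 _] : {x0 : T | true}.
  by case: (set_0Vmem R) bigR => [->|[x _]]; [rewrite cards0 leqNgt expn_gt0|exists x].
pose L := 2 * ramsey_num (ramsey_num (pB e).+2).
have [r [c [d H]]] := halving_sequence (L := L) x0 sepR bigR.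
suff : L < L by rewrite ltnn.
apply: (half_graph_length_lt (r := r) (c := c) (d := d) mK) => [k|k|k|k l /andP[kl lL]].
- by case/H => /(subsetP RK).
- by case/H.
- by case/H.
- by have [_ _ _] := H k (ltn_trans kl lL); apply; rewrite kl.
Qed.

Lemma tomega_le_tomega_bound : tomega e <= tomega_bound (pB e).
Proof. by apply/bigmax_leqP => K mK; apply/ltnW/card_classes_meeting_lt. Qed.

End Graph.

(** * Equivalence of the parameters *)

Definition param_bounded (p q : forall T : finType, rel T -> nat) : Prop :=
  exists f : nat -> nat, forall (T : finType) (e : rel T),
    symmetric e -> irreflexive e -> p T e <= f (q T e).

Lemma param_equivP p q :
  param_equiv p q <-> param_bounded p q /\ param_bounded q p.
Proof.
split=> [[f [g pq]]|[[f pq] [g qp]]]; last by exists f, g => T e es ei; split; auto.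
by split; [exists f|exists g] => T e es ei; case: (pq T e es ei).
Qed.

Lemma param_bounded_trans q p r :
  param_bounded p q -> param_bounded q r -> param_bounded p r.
Proof.
(* [f] need not be monotone, but its running maximum is. *)
move=> [f pq] [g qr]; exists (fun n => \max_(m < (g n).+1) f m) => T e es ei.
apply: leq_trans (pq T e es ei) _.
by apply: (leq_bigmax (Ordinal _ : 'I_(g (r T e)).+1)); rewrite ltnS qr.
Qed.

Lemma pB_bounded_alpha_star_tomega :
  param_bounded pB (fun T e => maxn (alpha_star e) (tomega e)).
Proof. by exists id => T e es _; apply: pB_le_alpha_star_tomega. Qed.

Lemma alpha_star_tomega_bounded_theta_star_tomega :
  param_bounded (fun T e => maxn (alpha_star e) (tomega e))
                (fun T e => maxn (theta_star e) (tomega e)).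
Proof.
exists id => T e _ _; rewrite geq_max leq_maxr andbT.
exact: leq_trans (alpha_star_le_theta_star e) (leq_maxl _ _).
Qed.

Lemma theta_star_tomega_bounded_cideg_tomega :
  param_bounded (fun T e => maxn (theta_star e) (tomega e))
                (fun T e => maxn (cideg e) (tomega e)).
Proof.
exists id => T e es ei; rewrite geq_max leq_maxr andbT.
exact: leq_trans (theta_star_le_cideg es) (leq_maxl _ _).
Qed.

Lemma cideg_tomega_bounded_tDelta :
  param_bounded (fun T e => maxn (cideg e) (tomega e)) tDelta.
Proof.
exists (fun d => maxn (2 ^ d) d.+1) => T e es ei.
by rewrite geq_max !leq_max cideg_le_exp_tDelta ?tomega_le_tDelta ?orbT.
Qed.

Lemma tDelta_bounded_pB : param_bounded tDelta pB.
Proof.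
exists (fun q => ramsey_num (maxn (tomega_bound q) q.+1)) => T e es ei.
apply: leq_trans (tDelta_le_ramsey es ei) _.
by rewrite leq_pexp2l // leq_add ?geq_max ?leq_max ?tomega_le_tomega_bound ?leqnn ?orbT.
Qed.

Lemma cideg_tomega_bounded_cdeg :
  param_bounded (fun T e => maxn (cideg e) (tomega e)) cdeg.
Proof.
exists (fun d => maxn d.+1 (2 ^ d)) => T e es ei.
by rewrite geq_max !leq_max cideg_le_cdeg ?tomega_le_exp_cdeg ?orbT.
Qed.

Lemma cdeg_bounded_cideg_tomega :
  param_bounded cdeg (fun T e => maxn (cideg e) (tomega e)).
Proof.
exists (fun m => m * m) => T e es ei.
by apply: leq_trans (cdeg_le_tomega_cideg e) _; rewrite mulnC leq_mul ?leq_maxl ?leq_maxr.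
Qed.

Theorem corollary7p6 :
  param_equiv pB tDelta /\
  param_equiv pB cdeg /\
  param_equiv pB (fun T e => maxn (cideg e) (tomega e)) /\
  param_equiv pB (fun T e => maxn (alpha_star e) (tomega e)) /\
  param_equiv pB (fun T e => maxn (theta_star e) (tomega e)).
Proof.
have pB_A := pB_bounded_alpha_star_tomega.
have A_Th := alpha_star_tomega_bounded_theta_star_tomega.
have Th_C := theta_star_tomega_bounded_cideg_tomega.
have C_pB := param_bounded_trans cideg_tomega_bounded_tDelta tDelta_bounded_pB.
have pB_C := param_bounded_trans (param_bounded_trans pB_A A_Th) Th_C.
split; [|split; [|split; [|split]]]; apply/param_equivP; split.
- exact: param_bounded_trans pB_C cideg_tomega_bounded_tDelta.
- exact: tDelta_bounded_pB.
- exact: param_bounded_trans pB_C cideg_tomega_bounded_cdeg.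
- exact: param_bounded_trans cdeg_bounded_cideg_tomega C_pB.
- exact: pB_C.
- exact: C_pB.
- exact: pB_A.
- exact: param_bounded_trans (param_bounded_trans A_Th Th_C) C_pB.
- exact: param_bounded_trans pB_A A_Th.
- exact: param_bounded_trans Th_C C_pB.
Qed.
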